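(* Let $G$ be a group generated by a finite set $S$, acting by isometries on a geodesic $\delta$-hyperbolic $\mathbb{R}$-metric space $(X,d)$ ($\delta\geqslant0$), and let $x\in X$ with stabilizer $G_x$. Suppose the action is proper relative to $x$ and satisfies $(R2,k)$ for some $k\in\mathbb{N}$. Then $G$ is weakly hyperbolic relative to $G_x$.
   Context: An $\mathbb{R}$-metric space is an ordinary metric space; it is geodesic if any two points are joined by an isometrically embedded real interval; with Gromov product $(y\cdot z)_w=\tfrac12(d(y,w)+d(z,w)-d(y,z))$ it is $\delta$-hyperbolic if $(y\cdot z)_w\geqslant\min\{(y\cdot u)_w,(u\cdot z)_w\}-\delta$ for all $w,y,z,u$. The action satisfies $(R2,k)$ (with respect to $x$) if for all $g,h\in G$ there is $u\in G$ with $d(x,ux)\leqslant(gx\cdot hx)_x+k\delta$, $d(x,u^{-1}gx)\leqslant(g^{-1}x\cdot g^{-1}hx)_x+k\delta$ and $d(x,u^{-1}hx)\leqslant(h^{-1}x\cdot h^{-1}gx)_x+k\delta$. Let $\Gamma(G,S\cup G_x)$ be the Cayley graph of $G$ with respect to the (possibly infinite) generating set $S\cup G_x$, with its path metric. The action is proper relative to $x$ if there is $\alpha>0$ with $d(x,gx)>\alpha$ for every $g\in G\smallsetminus G_x$, and for every $N\in\mathbb{N}$ the set $B_N=\{g\in G: d(x,gx)\leqslant N\}$ is bounded in $\Gamma(G,S\cup G_x)$. $G$ is weakly hyperbolic relative to a subgroup $H$ (in the sense of Farb and Osin) if the Cayley graph $\Gamma(G,S\cup H)$ is a Gromov-hyperbolic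 metric space. *)

From Stdlib Require Import Reals List.
Open Scope R_scope.
Set Implicit Arguments.

Record is_group (G : Type) (mul : G -> G -> G) (inv : G -> G) (e : G) : Prop := {
  grp_assoc : forall a b c, mul a (mul b c) = mul (mul a b) c;
  grp_idl : forall a, mul e a = a;
  grp_invl : forall a, mul (inv a) a = e
}.

(** Words over a subset [A] of [G]: a letter [(false,a)] stands for [a],
    [(true,a)] for [a^-1]; every [a] must lie in [A]. *)
Definition letter_val (G : Type) (inv : G -> G) (l : bool * G) : G :=
  if fst l then inv (snd l) else snd l.

Definition word_val (G : Type) (mul : G -> G -> G) (inv : G -> G) (e : G)
  (w : list (bool * G)) : G :=
  fold_right (fun l acc => mul (letter_val inv l) acc) e w.

Definition word_over (G : Type) (A : G -> Prop) (w : list (bool * G)) : Prop :=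
  Forall (fun l => A (snd l)) w.

Definition generates (G : Type) (mul : G -> G -> G) (inv : G -> G) (e : G)
  (A : G -> Prop) : Prop :=
  forall g, exists w, word_over A w /\ word_val mul inv e w = g.

Definition wlen_le (G : Type) (mul : G -> G -> G) (inv : G -> G) (e : G)
  (A : G -> Prop) (g : G) (n : nat) : Prop :=
  exists w, word_over A w /\ word_val mul inv e w = g /\ (length w <= n)%nat.

Definition cay_dist (G : Type) (mul : G -> G -> G) (inv : G -> G) (e : G)
  (A : G -> Prop) (g h : G) (n : nat) : Prop :=
  wlen_le mul inv e A (mul (inv g) h) n /\
  forall m, wlen_le mul inv e A (mul (inv g) h) m -> (n <= m)%nat.

Definition cay_bounded (G : Type) (mul : G -> G -> G) (inv : G -> G) (e : G)
  (A : G -> Prop) (B : G -> Prop) : Prop :=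
  exists M : nat, forall g, B g -> wlen_le mul inv e A g M.

Definition gprod (dyw dzw dyz : R) : R := (dyw + dzw - dyz) / 2.

(** Gamma(G,A) is Gromov hyperbolic (four-point condition on its vertex set
    with the path metric, for some constant). *)
Definition cay_hyperbolic (G : Type) (mul : G -> G -> G) (inv : G -> G) (e : G)
  (A : G -> Prop) : Prop :=
  exists dl : R, 0 <= dl /\
  forall w y z u (dyw dzw dyz duw dyu duz : nat),
    cay_dist mul inv e A y w dyw -> cay_dist mul inv e A z w dzw ->
    cay_dist mul inv e A y z dyz -> cay_dist mul inv e A u w duw ->
    cay_dist mul inv e A y u dyu -> cay_dist mul inv e A u z duz ->
    gprod (INR dyw) (INR dzw) (INR dyz) >=
      Rmin (gprod (INR dyw) (INR duw) (INR dyu))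
           (gprod (INR duw) (INR dzw) (INR duz)) - dl.

Definition weakly_rel_hyperbolic (G : Type) (mul : G -> G -> G) (inv : G -> G)
  (e : G) (S : list G) (H : G -> Prop) : Prop :=
  cay_hyperbolic mul inv e (fun g => In g S \/ H g).

Record is_metric (X : Type) (d : X -> X -> R) : Prop := {
  met_nonneg : forall a b, 0 <= d a b;
  met_sep : forall a b, d a b = 0 <-> a = b;
  met_sym : forall a b, d a b = d b a;
  met_tri : forall a b c, d a c <= d a b + d b c
}.

Definition geodesic_space (X : Type) (d : X -> X -> R) : Prop :=
  forall y z, exists gam : R -> X, gam 0 = y /\ gam (d y z) = z /\
    forall s t, 0 <= s <= d y z -> 0 <= t <= d y z ->
      d (gam s) (gam t) = Rabs (s - t).

Definition gromov (X : Type) (d : X -> X -> R) (y z w : X) : R :=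
  (d y w + d z w - d y z) / 2.

Definition hyperbolic (X : Type) (d : X -> X -> R) (delta : R) : Prop :=
  forall w y z u, gromov d y z w >= Rmin (gromov d y u w) (gromov d u z w) - delta.

Definition isometric_action (G X : Type) (mul : G -> G -> G) (e : G)
  (d : X -> X -> R) (act : G -> X -> X) : Prop :=
  (forall p, act e p = p) /\
  (forall g h p, act (mul g h) p = act g (act h p)) /\
  (forall g p q, d (act g p) (act g q) = d p q).

Definition R2k (G X : Type) (mul : G -> G -> G) (inv : G -> G)
  (d : X -> X -> R) (act : G -> X -> X) (x : X) (delta : R) (k : nat) : Prop :=
  forall g h : G, exists u : G,
    d x (act u x) <= gromov d (act g x) (act h x) x + INR k * delta /\
    d x (act (mul (inv u) g) x)
      <= gromov d (act (inv g) x) (act (mul (inv g) h) x) x + INR k * delta /\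
    d x (act (mul (inv u) h) x)
      <= gromov d (act (inv h) x) (act (mul (inv h) g) x) x + INR k * delta.

Definition proper_rel (G X : Type) (mul : G -> G -> G) (inv : G -> G) (e : G)
  (S : list G) (d : X -> X -> R) (act : G -> X -> X) (x : X) : Prop :=
  (exists alpha, alpha > 0 /\ forall g, act g x <> x -> d x (act g x) > alpha) /\
  (forall N : nat,
     cay_bounded mul inv e (fun g => In g S \/ act g x = x)
                 (fun g => d x (act g x) <= INR N)).

From Stdlib Require Import Reals List Lra Lia Classical Wf_nat.
Open Scope R_scope.
Set Implicit Arguments.

(** Let [A = S u G_x] and write [|g|] for word length over [A].  The proof
    compares the Cayley graph Gamma(G,A) with the orbit [G x] in [X]:

    - The orbit map is Lipschitz: each letter of [A] moves [x] by a bounded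
      amount, so geodesic words give orbit paths with bounded steps.
    - Conversely [|g| <= lam d(x, g x) + mu]: (R2,k) splits every [g] into two
      factors of about half the displacement, and properness relative to [x]
      bounds [|g|] when the displacement is small; induct on displacement.
      Hence orbit paths of geodesic words are discrete quasi-geodesics.
    - Stability of quasi-geodesics in the geodesic hyperbolic space [X]
      (proved below via a dyadic chain argument) turns "c x is almost between
      g x and h x" into "c is almost between g and h in Gamma".
    - (R2,k) provides approximate centers of orbit triangles; in Gamma the
      Gromov product [(y.z)_w] is read off as the distance from [w] to such
      a center, and the four-point condition of [X] transfers to Gamma. *)

Section GroupWords.
Variables (G : Type) (mul : G -> G -> G) (inv : G -> G) (e : G).
Hypothesis Hg : is_group mul inv e.

Lemma mulA a b c : mul a (mul b c) = mul (mul a b) c.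
Proof. apply (grp_assoc Hg). Qed.
Lemma mul1g a : mul e a = a.
Proof. apply (grp_idl Hg). Qed.
Lemma mulVg a : mul (inv a) a = e.
Proof. apply (grp_invl Hg). Qed.
Lemma mulKg a b : mul (inv a) (mul a b) = b.
Proof. rewrite mulA, mulVg, mul1g; reflexivity. Qed.

(** The right inverse law follows since [a * a^-1] is idempotent. *)
Lemma mulgV a : mul a (inv a) = e.
Proof.
  set (y := mul a (inv a)).
  assert (Hidem : mul y y = y).
  { unfold y. rewrite <- mulA, (mulA (inv a) a), mulVg, mul1g. reflexivity. }
  rewrite <- (mulKg y y), Hidem, mulVg. reflexivity.
Qed.
Lemma mulg1 a : mul a e = a.
Proof. rewrite <- (mulVg a), mulA, mulgV, mul1g. reflexivity. Qed.
Lemma mulKVg a b : mul a (mul (inv a) b) = b.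
Proof. rewrite mulA, mulgV, mul1g; reflexivity. Qed.
Lemma inv_unique a b : mul a b = e -> b = inv a.
Proof. intro H. rewrite <- (mulKg a b), H, mulg1. reflexivity. Qed.
Lemma invgK a : inv (inv a) = a.
Proof. symmetry. apply inv_unique, mulVg. Qed.
Lemma invMg a b : inv (mul a b) = mul (inv b) (inv a).
Proof.
  symmetry. apply inv_unique.
  rewrite <- mulA, (mulA b), mulgV, mul1g, mulgV. reflexivity.
Qed.
Lemma inv1 : inv e = e.
Proof. symmetry; apply inv_unique, mul1g. Qed.

Lemma rel_trans a b c : mul (mul (inv a) b) (mul (inv b) c) = mul (inv a) c.
Proof. rewrite <- mulA, mulKVg. reflexivity. Qed.
Lemma rel_sym a b : inv (mul (inv a) b) = mul (inv b) a.
Proof. rewrite invMg, invgK. reflexivity. Qed.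

Lemma rel_cancel g a b : mul (inv (mul g a)) (mul g b) = mul (inv a) b.
Proof. rewrite invMg, <- mulA, mulKg. reflexivity. Qed.

Definition flip_letter (l : bool * G) : bool * G := (negb (fst l), snd l).
Definition word_inv (w : list (bool * G)) : list (bool * G) := rev (map flip_letter w).

Lemma word_val_app w1 w2 :
  word_val mul inv e (w1 ++ w2) = mul (word_val mul inv e w1) (word_val mul inv e w2).
Proof.
  induction w1 as [|l w1 IH]; simpl; [rewrite mul1g; reflexivity|].
  rewrite IH, mulA. reflexivity.
Qed.

Lemma word_val_inv w : word_val mul inv e (word_inv w) = inv (word_val mul inv e w).
Proof.
  induction w as [|[b a] w IH]; unfold word_inv in *; simpl; [rewrite inv1; reflexivity|].
  rewrite word_val_app, IH. simpl. rewrite mulg1, invMg.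
  destruct b; unfold letter_val; simpl; rewrite ?invgK; reflexivity.
Qed.

Variable A : G -> Prop.
Notation wl := (wlen_le mul inv e A).
Notation cd := (cay_dist mul inv e A).

Lemma word_over_app w1 w2 : word_over A w1 -> word_over A w2 -> word_over A (w1 ++ w2).
Proof. unfold word_over; intros; apply Forall_app; auto. Qed.
Lemma word_over_inv w : word_over A w -> word_over A (word_inv w).
Proof.
  unfold word_over, word_inv; intro H. apply Forall_rev, Forall_map.
  eapply Forall_impl; [|exact H]. intros [b a]; simpl; auto.
Qed.
Lemma word_over_firstn n w : word_over A w -> word_over A (firstn n w).
Proof.
  unfold word_over. revert w; induction n; intros [|l w] H; simpl; auto.
  inversion H; subst; constructor; auto.
Qed.
Lemma word_over_skipn n w : word_over A w -> word_over A (skipn n w).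
Proof.
  unfold word_over. revert w; induction n; intros [|l w] H; simpl; auto.
  inversion H; subst; auto.
Qed.

Lemma wlen_inv g n : wl g n -> wl (inv g) n.
Proof.
  intros [w [Hw [Hv Hn]]]. exists (word_inv w); repeat split.
  - apply word_over_inv; exact Hw.
  - rewrite word_val_inv, Hv; reflexivity.
  - unfold word_inv; rewrite length_rev, length_map; exact Hn.
Qed.
Lemma wlen_mul g h n m : wl g n -> wl h m -> wl (mul g h) (n + m).
Proof.
  intros [w [Hw [Hv Hn]]] [w' [Hw' [Hv' Hn']]]. exists (w ++ w'); repeat split.
  - apply word_over_app; assumption.
  - rewrite word_val_app; subst; reflexivity.
  - rewrite length_app; lia.
Qed.

Lemma wlen_rel_trans a b c n m :
  wl (mul (inv a) b) n -> wl (mul (inv b) c) m -> wl (mul (inv a) c) (n + m).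
Proof. intros H1 H2. rewrite <- (rel_trans a b c). apply wlen_mul; assumption. Qed.
Lemma wlen_rel_sym a b n : wl (mul (inv a) b) n -> wl (mul (inv b) a) n.
Proof. intro H. rewrite <- rel_sym. apply wlen_inv; exact H. Qed.

Lemma nat_least (P : nat -> Prop) :
  (exists n, P n) -> exists n, P n /\ forall m, P m -> (n <= m)%nat.
Proof.
  intros [n Hn]. revert Hn.
  induction n as [n IH] using (well_founded_induction lt_wf). intro Hn.
  destruct (classic (exists m, P m /\ (m < n)%nat)) as [[m [Hm Hlt]]|Hno].
  - exact (IH m Hlt Hm).
  - exists n; split; [exact Hn|]. intros m Hm.
    destruct (Nat.lt_ge_cases m n); [exfalso; eauto|assumption].
Qed.

Lemma cay_dist_exists g h : (forall f, exists n, wl f n) -> exists n, cd g h n.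
Proof. intro Hgen. apply nat_least, Hgen. Qed.

Lemma cay_dist_sym g h n : cd g h n -> cd h g n.
Proof.
  intros [Hn Hmin]. split; [apply wlen_rel_sym; exact Hn|].
  intros m Hm. apply Hmin, wlen_rel_sym; exact Hm.
Qed.

Lemma cay_dist_tri a b c n m l : cd a b n -> cd b c m -> cd a c l -> (l <= n + m)%nat.
Proof. intros [H1 _] [H2 _] [_ H3]. apply H3, wlen_rel_trans with b; assumption. Qed.

Definition cay_between (K : R) (g c h : G) : Prop :=
  forall n1 n2 n, cd g c n1 -> cd c h n2 -> cd g h n -> INR n1 + INR n2 <= INR n + K.

Lemma center_gprod (Hgen : forall f, exists n, wl f n) K w y z m a dyw dzw dyz :
  cay_between K w m y -> cay_between K w m z -> cay_between K y m z ->
  cd w m a -> cd y w dyw -> cd z w dzw -> cd y z dyz ->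
  INR a - K <= gprod (INR dyw) (INR dzw) (INR dyz) <= INR a + K / 2.
Proof.
  intros Bwy Bwz Byz Ha Hyw Hzw Hyz.
  destruct (cay_dist_exists m y Hgen) as [b Hb].
  destruct (cay_dist_exists m z Hgen) as [c Hc].
  apply cay_dist_sym in Hyw, Hzw. pose proof (cay_dist_sym Hb) as Hb'.
  pose proof (Bwy _ _ _ Ha Hb Hyw). pose proof (Bwz _ _ _ Ha Hc Hzw).
  pose proof (Byz _ _ _ Hb' Hc Hyz).
  pose proof (le_INR _ _ (cay_dist_tri Ha Hb Hyw)).
  pose proof (le_INR _ _ (cay_dist_tri Ha Hc Hzw)).
  pose proof (le_INR _ _ (cay_dist_tri Hb' Hc Hyz)).
  rewrite !plus_INR in *. unfold gprod. split; lra.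
Qed.

End GroupWords.

Lemma pow2_dominates_affine (al be : R) : 0 <= al -> 0 <= be ->
  forall K : nat, 2 ^ K <= al + be * INR K -> INR K <= 4 + al + be.
Proof.
  intros Hal Hbe.
  assert (Hsq : forall K : nat, (4 <= K)%nat -> INR K * INR K <= 2 ^ K /\ 4 <= INR K).
  { intros K HK. induction HK as [|m Hm [IH1 IH2]].
    - simpl. lra.
    - rewrite S_INR. simpl pow. split; nra. }
  intros K HK.
  destruct (Compare_dec.le_lt_dec 4 K) as [H4|H4].
  - destruct (Hsq K H4). nra.
  - apply lt_INR in H4. simpl in H4. lra.
Qed.

Fixpoint min_upto (f : nat -> R) (n : nat) : R :=
  match n with O => f O | S m => Rmin (min_upto f m) (f (S m)) end.

Lemma min_upto_le f n i : (i <= n)%nat -> min_upto f n <= f i.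
Proof.
  induction n; intro H; simpl.
  - replace i with O by lia. lra.
  - destruct (Nat.eq_dec i (S n)) as [->|Hne]; [apply Rmin_r|].
    eapply Rle_trans; [apply Rmin_l|]. apply IHn. lia.
Qed.

Lemma min_upto_attained f n : exists i, (i <= n)%nat /\ min_upto f n = f i.
Proof.
  induction n as [|n [i [Hi Hfi]]]; simpl; [exists O; auto|].
  unfold Rmin. destruct (Rle_dec (min_upto f n) (f (S n))).
  - exists i; auto.
  - exists (S n); auto.
Qed.

Lemma approx_maximizer (F : R -> R) (l B : R) :
  0 <= l -> (forall t, 0 <= t <= l -> F t <= B) ->
  exists t0, 0 <= t0 <= l /\ forall t, 0 <= t <= l -> F t <= F t0 + 1.
Proof.
  intros Hl HB.
  set (E := fun v => exists t, 0 <= t <= l /\ v = F t).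
  assert (Hbd : bound E) by (exists B; intros v [t [Ht ->]]; auto).
  assert (Hne : exists v, E v) by (exists (F 0), 0; split; [lra|reflexivity]).
  destruct (completeness E Hbd Hne) as [m [Hub Hleast]].
  apply NNPP. intro Hno.
  assert (Hub' : is_upper_bound E (m - 1)).
  { intros v [t0 [Ht0 ->]]. apply Rnot_lt_le. intro Hbig.
    apply Hno. exists t0; split; [exact Ht0|]. intros t Ht.
    assert (F t <= m) by (apply Hub; exists t; auto). lra. }
  specialize (Hleast _ Hub'). lra.
Qed.

Lemma discrete_ivt (F : nat -> R) n v :
  F 0%nat <= v -> v < F n -> exists i, (i < n)%nat /\ F i <= v < F (S i).
Proof.
  induction n; intros H0 H1; [lra|].
  destruct (Rlt_dec v (F n)) as [H|H].
  - destruct (IHn H0 H) as [i [Hi1 Hi2]]. exists i; split; [lia|exact Hi2].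
  - exists n; split; [lia|lra].
Qed.

Lemma firstn_S {T} (w : list T) i : (i < length w)%nat ->
  exists l, In l w /\ firstn (S i) w = firstn i w ++ l :: nil.
Proof.
  revert i; induction w as [|a w IH]; intros i H; simpl in H; [lia|].
  destruct i as [|i]; [exists a; simpl; auto|].
  destruct (IH i ltac:(lia)) as [l [H1 H2]]. exists l; split; simpl; [auto|].
  simpl in H2. rewrite H2. reflexivity.
Qed.

Lemma pow2_bracket (m : nat) : exists K : nat, (m + 2 <= 2 ^ K)%nat /\ 2 ^ K <= 2 * INR (m + 2).
Proof.
  exists (Nat.log2_up (m + 2)).
  destruct (Nat.log2_up_spec (m + 2) ltac:(lia)) as [Hlo Hhi]. split; [exact Hhi|].
  destruct (Nat.log2_up (m + 2)) as [|K] eqn:EK; [simpl in Hhi; lia|].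
  simpl Nat.pred in Hlo. apply lt_INR in Hlo.
  replace 2 with (INR 2) at 1 by reflexivity. rewrite <- pow_INR, Nat.pow_succ_r', mult_INR.
  simpl (INR 2). lra.
Qed.

Section Hyperbolic.
Variables (X : Type) (d : X -> X -> R).
Hypothesis Hm : is_metric d.
Variable delta : R.
Hypothesis Hh : hyperbolic d delta.

Lemma dsym a b : d a b = d b a.
Proof. apply (met_sym Hm). Qed.
Lemma dtri a b c : d a c <= d a b + d b c.
Proof. apply (met_tri Hm). Qed.
Lemma dpos a b : 0 <= d a b.
Proof. apply (met_nonneg Hm). Qed.
Lemma dself a : d a a = 0.
Proof. apply (met_sep Hm); reflexivity. Qed.

(** The four-point condition at a single point forces [delta >= 0]. *)
Lemma hyperbolic_delta_nonneg (a : X) : 0 <= delta.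
Proof.
  pose proof (Hh a a a a) as H. unfold gromov, Rmin in H.
  rewrite dself in H. destruct (Rle_dec _ _); lra.
Qed.

Lemma gromov_sym a b w : gromov d a b w = gromov d b a w.
Proof. unfold gromov. rewrite (dsym a b). lra. Qed.

Lemma dyadic_chain (q : X) (z : nat -> X) (r : R) :
  forall K a N, (1 <= N)%nat -> (N <= 2 ^ K)%nat ->
  (forall i, (a <= i < a + N)%nat -> gromov d (z i) (z (S i)) q >= r) ->
  gromov d (z a) (z (a + N)%nat) q >= r - INR K * delta.
Proof.
  induction K as [|K IH]; intros a N H1 H2 Hlink.
  - simpl in H2. replace N with 1%nat by lia. rewrite Nat.add_1_r.
    specialize (Hlink a ltac:(lia)). simpl. lra.
  - pose proof (hyperbolic_delta_nonneg q) as Hdelta. rewrite S_INR.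
    destruct (Compare_dec.le_lt_dec N (2 ^ K)) as [HN|HN].
    + specialize (IH a N H1 HN Hlink). pose proof (pos_INR K). nra.
    + set (N1 := (2 ^ K)%nat). simpl in H2. fold N1 in H2, HN.
      assert (HN1 : (1 <= N1)%nat) by (pose proof (Nat.pow_nonzero 2 K); unfold N1; lia).
      pose proof (IH a N1 HN1 ltac:(lia) ltac:(intros; apply Hlink; lia)) as E1.
      pose proof (IH (a + N1)%nat (N - N1)%nat ltac:(lia) ltac:(unfold N1 in *; lia)
        ltac:(intros; apply Hlink; lia)) as E2.
      replace (a + N1 + (N - N1))%nat with (a + N)%nat in E2 by lia.
      pose proof (Hh q (z a) (z (a + N)%nat) (z (a + N1)%nat)) as H4.
      unfold Rmin in H4. destruct (Rle_dec _ _); lra.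
Qed.

Lemma gromov_lipschitz a b c w : gromov d a c w <= gromov d b c w + d a b.
Proof.
  unfold gromov. pose proof (dtri a b w). pose proof (dtri b a c).
  rewrite (dsym b a) in *. lra.
Qed.

Lemma gromov_complement a b c : gromov d a b c + gromov d c b a = d a c.
Proof. unfold gromov. rewrite (dsym b a), (dsym c a), (dsym c b). lra. Qed.

Definition geodesic_segment (gam : R -> X) (a b : X) : Prop :=
  gam 0 = a /\ gam (d a b) = b /\
  forall s t, 0 <= s <= d a b -> 0 <= t <= d a b -> d (gam s) (gam t) = Rabs (s - t).

Section Segment.
Variables (gam : R -> X) (a b : X).
Hypothesis Hgam : geodesic_segment gam a b.

Lemma segment_dist s t : 0 <= s -> s <= t -> t <= d a b -> d (gam s) (gam t) = t - s.
Proof.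
  intros Hs Hst Ht. destruct Hgam as [_ [_ Hiso]].
  rewrite Hiso by lra. rewrite Rabs_left1; lra.
Qed.
Lemma segment_dist_start t : 0 <= t <= d a b -> d (gam t) a = t.
Proof.
  intro Ht. destruct Hgam as [H0 _].
  transitivity (d (gam 0) (gam t)); [rewrite H0, dsym; reflexivity|].
  rewrite segment_dist; lra.
Qed.
Lemma segment_dist_end t : 0 <= t <= d a b -> d (gam t) b = d a b - t.
Proof.
  intro Ht. destruct Hgam as [_ [H1 _]].
  transitivity (d (gam t) (gam (d a b))); [rewrite H1; reflexivity|].
  rewrite segment_dist; lra.
Qed.

(** Every point [q] is within [(a.b)_q + 2 delta] of the segment [[a,b]]:
    the witness is the point at distance [(q.b)_a] from [a]. *)
Lemma segment_near_point q :
  exists t, 0 <= t <= d a b /\ d q (gam t) <= gromov d a b q + 2 * delta.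
Proof.
  set (t := gromov d q b a).
  assert (Ht : 0 <= t <= d a b).
  { unfold t, gromov. pose proof (dtri q a b). pose proof (dtri a q b).
    pose proof (dtri q b a). rewrite (dsym a q), (dsym b a) in *. split; lra. }
  assert (Et : t = (d q a + d a b - d q b) / 2)
    by (unfold t, gromov; rewrite (dsym b a); reflexivity).
  exists t; split; [exact Ht|].
  pose proof (Hh a q (gam t) b) as H. unfold gromov in H |- *.
  rewrite (segment_dist_start Ht), (dsym b a), (dsym b (gam t)), (segment_dist_end Ht) in H.
  rewrite (dsym a q), (dsym b q) in *. unfold Rmin in H. destruct (Rle_dec _ _); lra.
Qed.
End Segment.

(** A path with short steps cannot stay far from a point [y] lying between
    [y1] and [y2] ([(y1.y2)_y <= 0]) while connecting [y1] to [y2]: if the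
    path [p a, ..., p b] has steps at most [L] and stays at distance [>= D]
    from [y], its ends satisfy [(y1.p a)_y, (p b.y2)_y >= D - 1], and the
    chain [y1, p a, ..., p b, y2] has at most [2^K] links, then the dyadic
    chain estimate forces [D <= L + K delta]. *)
Lemma far_point_bound (p : nat -> X) (n : nat) (L D : R) (y y1 y2 : X) (a b : nat) :
  1 <= L -> (a <= b <= n)%nat ->
  (forall i, (i < n)%nat -> d (p i) (p (S i)) <= L) ->
  (forall i, (i <= n)%nat -> D <= d y (p i)) ->
  gromov d y1 (p a) y >= D - 1 -> gromov d (p b) y2 y >= D - 1 ->
  gromov d y1 y2 y <= 0 ->
  forall K, (b - a + 2 <= 2 ^ K)%nat -> D <= L + INR K * delta.
Proof.
  intros HL Hab Hstep Hfar H1 H2 H0 K HK.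
  set (z := fun i => if Nat.eqb i 0 then y1
                     else if Nat.leb i (b - a + 1) then p (a + i - 1)%nat else y2).
  assert (Zfirst : z 0%nat = y1) by reflexivity.
  assert (Zlast : z (0 + (b - a + 2))%nat = y2).
  { unfold z. rewrite (proj2 (Nat.eqb_neq _ 0)), (proj2 (Nat.leb_gt _ _)) by lia.
    reflexivity. }
  assert (Zmid : forall i, (1 <= i <= b - a + 1)%nat -> z i = p (a + i - 1)%nat).
  { intros i Hi. unfold z. rewrite (proj2 (Nat.eqb_neq _ 0)), (proj2 (Nat.leb_le _ _)) by lia.
    reflexivity. }
  assert (Hlink : forall i, (0 <= i < 0 + (b - a + 2))%nat ->
                    gromov d (z i) (z (S i)) y >= D - L).
  { intros i Hi. destruct (Nat.eq_dec i 0) as [->|Hi0].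
    - rewrite Zfirst, Zmid by lia. replace (a + 1 - 1)%nat with a by lia. lra.
    - destruct (Nat.eq_dec i (b - a + 1)) as [->|Hi1].
      + rewrite Zmid by lia. replace (S (b - a + 1)) with (0 + (b - a + 2))%nat by lia.
        rewrite Zlast. replace (a + (b - a + 1) - 1)%nat with b by lia. lra.
      + rewrite !Zmid by lia. replace (a + S i - 1)%nat with (S (a + i - 1)) by lia.
        pose proof (Hstep (a + i - 1)%nat ltac:(lia)).
        pose proof (Hfar (a + i - 1)%nat ltac:(lia)).
        pose proof (Hfar (S (a + i - 1)) ltac:(lia)).
        unfold gromov. rewrite (dsym (p _) y), (dsym (p (S _)) y). lra. }
  pose proof (@dyadic_chain y z (D - L) K 0 (b - a + 2) ltac:(lia) HK Hlink) as C.
  rewrite Zfirst, Zlast in C. lra.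
Qed.

Definition almost_between (c : R) (a m b : X) : Prop := d a m + d m b <= d a b + c.

Lemma almost_between_nested (W Y P Q : X) c c' : 0 <= c -> 0 <= c' ->
  almost_between c W P Y -> almost_between c W Q Y -> d W P >= d W Q - c' ->
  almost_between (3 * c' + 5 * c + 6 * delta) W Q P.
Proof.
  unfold almost_between. intros Hc Hc' H1 H2 H3. pose proof (Hh Q W Y P) as H.
  unfold gromov in H.
  pose proof (dtri W Q Y). pose proof (dtri W P Y). pose proof (dtri W Q P).
  pose proof (dtri P Q Y). pose proof (dpos W Q).
  rewrite (dsym W Q), (dsym Y Q), (dsym W P), (dsym P Q), (dsym W Y), (dsym P Y) in *.
  unfold Rmin in H. destruct (Rle_dec _ _); lra.
Qed.

Lemma approximate_center (a b c m : X) (s : R) :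
  d a m <= gromov d b c a + s -> d m b <= gromov d a c b + s -> d m c <= gromov d a b c + s ->
  almost_between (2 * s) a m b /\ almost_between (2 * s) a m c /\
  almost_between (2 * s) b m c /\ d a m >= gromov d b c a - s.
Proof.
  unfold almost_between, gromov. intros H1 H2 H3.
  pose proof (dtri a m b). pose proof (dtri a m c).
  rewrite (dsym b a), (dsym c a), (dsym c b), (dsym b m) in *. repeat split; lra.
Qed.

(** Stability of discrete quasi-geodesics. *)
Section QuasiGeodesicPath.
Variables (L lam mu : R) (n : nat) (p : nat -> X) (gam : R -> X).
Hypotheses (HL : 1 <= L) (Hlam : 0 <= lam) (Hmu : 0 <= mu).
Hypothesis Hstep : forall i, (i < n)%nat -> d (p i) (p (S i)) <= L.
Hypothesis Hqg : forall i j, (i <= j <= n)%nat -> INR (j - i) <= lam * d (p i) (p j) + mu.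
Hypothesis Hgam : geodesic_segment gam (p 0%nat) (p n).

Definition dist_path (y : X) : R := min_upto (fun i => d y (p i)) n.

Lemma dist_path_le y i : (i <= n)%nat -> dist_path y <= d y (p i).
Proof. apply (min_upto_le (fun i => d y (p i))). Qed.

Lemma dist_path_attained y : exists i, (i <= n)%nat /\ d y (p i) = dist_path y.
Proof.
  destruct (min_upto_attained (fun i => d y (p i)) n) as [i [Hi E]].
  exists i; split; [exact Hi|symmetry; exact E].
Qed.

Lemma index_gap_bound a b E : (a <= n)%nat -> (b <= n)%nat -> d (p a) (p b) <= E ->
  INR (if Nat.leb a b then b - a else a - b) <= lam * E + mu.
Proof.
  intros Ha Hb HE. destruct (Nat.leb a b) eqn:Hab.
  - apply Nat.leb_le in Hab. pose proof (@Hqg a b ltac:(lia)). nra.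
  - apply Nat.leb_gt in Hab. pose proof (@Hqg b a ltac:(lia)). rewrite dsym in HE. nra.
Qed.

Definition stray_bound : R :=
  L + (4 + 2 * (6 * lam * L + 6 * lam + mu + 2) + 12 * lam * delta) * delta.

Section FarthestPoint.
Variable t0 : R.
Hypothesis Ht0 : 0 <= t0 <= d (p 0%nat) (p n).
Let y := gam t0.
Let D := dist_path y.
Hypothesis Hmax : forall t, 0 <= t <= d (p 0%nat) (p n) -> dist_path (gam t) <= D + 1.

Lemma farthest_nonneg : 0 <= D.
Proof.
  destruct (dist_path_attained y) as [i [_ E]]. fold D in E. rewrite <- E. apply dpos.
Qed.

Lemma near_path t : 0 <= t <= d (p 0%nat) (p n) ->
  exists i, (i <= n)%nat /\ d (gam t) (p i) <= D + 1.
Proof.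
  intro Ht. destruct (dist_path_attained (gam t)) as [i [Hi E]].
  exists i; split; [exact Hi|]. rewrite E. apply Hmax, Ht.
Qed.

(** Going back [2D + 2] along the geodesic (or to its start), we reach a
    point near the path whose nearest path point lies "behind" [y]. *)
Lemma behind_witness : exists t1 a, 0 <= t1 <= t0 /\ t0 - t1 <= 2 * D + 2 /\
  (a <= n)%nat /\ d (gam t1) (p a) <= D + 1 /\ gromov d (gam t1) (p a) y >= D - 1.
Proof.
  pose proof farthest_nonneg.
  destruct (Rle_dec 0 (t0 - (2 * D + 2))) as [Hc|Hc].
  - destruct (@near_path (t0 - (2 * D + 2)) ltac:(lra)) as [a [Ha Hnear]].
    exists (t0 - (2 * D + 2)), a. repeat split; try lra; try exact Ha.
    pose proof (dist_path_le y Ha) as Hfar. change (dist_path y) with D in Hfar. unfold gromov, y.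
    rewrite (segment_dist Hgam) by lra.
    rewrite (dsym (p a) (gam t0)). fold y. lra.
  - exists 0, 0%nat. destruct Hgam as [G0 _]. rewrite G0, dself.
    pose proof (dist_path_le y (Nat.le_0_l n)) as Hfar. change (dist_path y) with D in Hfar.
    repeat split; try lra; try lia.
    unfold gromov. rewrite dself, (dsym (p 0%nat) y). lra.
Qed.

(** Symmetrically, going forward [2D + 2] (or to the end of the geodesic). *)
Lemma ahead_witness : exists t2 b, t0 <= t2 <= d (p 0%nat) (p n) /\ t2 - t0 <= 2 * D + 2 /\
  (b <= n)%nat /\ d (gam t2) (p b) <= D + 1 /\ gromov d (p b) (gam t2) y >= D - 1.
Proof.
  pose proof farthest_nonneg.
  destruct (Rle_dec (t0 + (2 * D + 2)) (d (p 0%nat) (p n))) as [Hc|Hc].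
  - destruct (@near_path (t0 + (2 * D + 2)) ltac:(lra)) as [b [Hb Hnear]].
    exists (t0 + (2 * D + 2)), b. repeat split; try lra; try exact Hb.
    pose proof (dist_path_le y Hb) as Hfar. change (dist_path y) with D in Hfar. unfold gromov, y.
    rewrite (dsym (gam _) (gam t0)), (segment_dist Hgam) by lra.
    rewrite (dsym (p b) (gam t0)), (dsym (p b) (gam _)). fold y. lra.
  - exists (d (p 0%nat) (p n)), n. destruct Hgam as [_ [G1 _]]. rewrite G1, dself.
    pose proof (dist_path_le y (Nat.le_refl n)) as Hfar. change (dist_path y) with D in Hfar.
    repeat split; try lra; try lia.
    unfold gromov. rewrite dself, (dsym (p n) y). lra.
Qed.

(** The two witnesses are at distance [O(D)] on the path, so their index
    gap is [O(D)]; the chain through them has logarithmic dyadic depth [K],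
    giving [D <= L + K delta] with [2^K = O(1 + K)], hence [D] is bounded. *)
Lemma farthest_distance_bound : D <= stray_bound.
Proof.
  pose proof (hyperbolic_delta_nonneg y) as Hdelta.
  pose proof farthest_nonneg as HD0.
  destruct behind_witness as [t1 [a [Ht1 [Ht1' [Ha [Ha1 Ha2]]]]]].
  destruct ahead_witness as [t2 [b [Ht2 [Ht2' [Hb [Hb1 Hb2]]]]]].
  assert (Hy_between : gromov d (gam t1) (gam t2) y <= 0).
  { unfold gromov, y. rewrite (dsym (gam t2) (gam t0)).
    rewrite (segment_dist Hgam (s:=t1) (t:=t0)), (segment_dist Hgam (s:=t0) (t:=t2)), (segment_dist Hgam (s:=t1) (t:=t2))
      by lra. lra. }
  assert (Hdab : d (p a) (p b) <= 6 * D + 6).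
  { pose proof (dtri (p a) (gam t1) (p b)). pose proof (dtri (gam t1) (gam t2) (p b)).
    rewrite (segment_dist Hgam (s:=t1) (t:=t2)) in * by lra.
    rewrite (dsym (p a) (gam t1)), (dsym (gam t2) (p b)) in *. lra. }
  pose proof (index_gap_bound Ha Hb Hdab) as Hgap.
  set (m := if Nat.leb a b then (b - a)%nat else (a - b)%nat) in Hgap.
  destruct (pow2_bracket m) as [K [HK1 HK2]].
  assert (HDK : D <= L + INR K * delta).
  { unfold m in HK1. destruct (Nat.leb a b) eqn:E.
    - apply Nat.leb_le in E.
      exact (far_point_bound p HL (conj E Hb) Hstep (fun i Hi => dist_path_le y Hi)
               Ha2 Hb2 Hy_between K HK1).
    - apply Nat.leb_gt in E. rewrite gromov_sym in Ha2, Hb2, Hy_between.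
      exact (far_point_bound p HL (conj (Nat.lt_le_incl _ _ E) Ha) Hstep
               (fun i Hi => dist_path_le y Hi) Hb2 Ha2 Hy_between K HK1). }
  assert (Hpow : 2 ^ K <= 2 * (6 * lam * L + 6 * lam + mu + 2) + 12 * lam * delta * INR K).
  { rewrite plus_INR in HK2. simpl (INR 2) in HK2. pose proof (pos_INR K). nra. }
  assert (HKb : INR K <= 4 + 2 * (6 * lam * L + 6 * lam + mu + 2) + 12 * lam * delta)
    by (apply pow2_dominates_affine; [nra|nra|exact Hpow]).
  unfold stray_bound. nra.
Qed.
End FarthestPoint.

Lemma geodesic_near_path t : 0 <= t <= d (p 0%nat) (p n) ->
  exists i, (i <= n)%nat /\ d (gam t) (p i) <= stray_bound + 2.
Proof.
  intro Ht. pose proof (dpos (p 0%nat) (p n)) as Hl.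
  destruct (approx_maximizer (fun t => dist_path (gam t)) (B := d (p 0%nat) (p n)) Hl) as [t0 [Ht0 Hmax]].
  { intros s Hs. eapply Rle_trans; [apply (dist_path_le (gam s) (Nat.le_0_l n))|].
    rewrite (segment_dist_start Hgam Hs). destruct Hs as [_ Hs]. exact Hs. }
  pose proof (farthest_distance_bound Ht0 Hmax) as HD.
  destruct (dist_path_attained (gam t)) as [i [Hi E]].
  exists i; split; [exact Hi|]. rewrite E. specialize (Hmax t Ht). simpl in Hmax. lra.
Qed.
End QuasiGeodesicPath.

Lemma quasi_geodesic_stability (Hgeo : geodesic_space d) (L lam mu K : R) :
  1 <= L -> 0 <= lam -> 0 <= mu ->
  exists C, forall n (p : nat -> X) q,
  (forall i, (i < n)%nat -> d (p i) (p (S i)) <= L) ->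
  (forall i j, (i <= j <= n)%nat -> INR (j - i) <= lam * d (p i) (p j) + mu) ->
  gromov d (p 0%nat) (p n) q <= K -> exists i, (i <= n)%nat /\ d q (p i) <= C.
Proof.
  intros HL Hlam Hmu.
  exists (stray_bound L lam mu + 2 + K + 2 * delta).
  intros n p q Hstep Hqg Hq.
  destruct (Hgeo (p 0%nat) (p n)) as [gam Hgam].
  destruct (segment_near_point Hgam q) as [t [Ht Hqt]].
  destruct (geodesic_near_path p HL Hlam Hmu Hstep Hqg Hgam Ht) as [i [Hi Hti]].
  exists i; split; [exact Hi|]. pose proof (dtri q (gam t) (p i)). lra.
Qed.

End Hyperbolic.

Section Action.
Variables (G : Type) (mul : G -> G -> G) (inv : G -> G) (e : G).
Hypothesis Hgrp : is_group mul inv e.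
Variable S : list G.
Hypothesis HS : generates mul inv e (fun g => In g S).
Variables (X : Type) (d : X -> X -> R).
Hypothesis Hmet : is_metric d.
Variable delta : R.
Hypothesis Hhyp : hyperbolic d delta.
Variable act : G -> X -> X.
Hypothesis Hact : isometric_action mul e d act.
Variable x : X.
Hypothesis Hprop : proper_rel mul inv e S d act x.
Variable k : nat.
Hypothesis HR2 : R2k mul inv d act x delta k.

Definition gen_set (g : G) : Prop := In g S \/ act g x = x.
Notation wl := (wlen_le mul inv e gen_set).
Notation cd := (cay_dist mul inv e gen_set).

Definition disp (g : G) : R := d x (act g x).

Lemma act_e p : act e p = p.
Proof. apply (proj1 Hact). Qed.
Lemma act_mul g h p : act (mul g h) p = act g (act h p).
Proof. apply (proj1 (proj2 Hact)). Qed.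
Lemma act_iso g p q : d (act g p) (act g q) = d p q.
Proof. apply (proj2 (proj2 Hact)). Qed.
Lemma act_invK g p : act (inv g) (act g p) = p.
Proof. rewrite <- act_mul, (mulVg Hgrp), act_e; reflexivity. Qed.
Lemma act_Kinv g p : act g (act (inv g) p) = p.
Proof. rewrite <- act_mul, (mulgV Hgrp), act_e; reflexivity. Qed.

Lemma orbit_dist g h : d (act g x) (act h x) = disp (mul (inv g) h).
Proof. unfold disp. rewrite <- (act_iso (inv g)), act_invK, act_mul; reflexivity. Qed.

Lemma disp_inv g : disp (inv g) = disp g.
Proof. unfold disp. rewrite <- (act_iso g), act_Kinv, (dsym Hmet); reflexivity. Qed.

Lemma gromov_act g p q r : gromov d (act g p) (act g q) (act g r) = gromov d p q r.
Proof. unfold gromov. rewrite !act_iso; reflexivity. Qed.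

Lemma generating : forall g, exists n, wl g n.
Proof.
  intro g. destruct (HS g) as [w [Hw Hv]]. exists (length w), w. repeat split; auto.
  unfold word_over in *. eapply Forall_impl; [|exact Hw]. intros a Ha; left; exact Ha.
Qed.

(** The Gromov products occurring in (R2,k), seen from [g x]. *)
Lemma gromov_translate_inv g h :
  gromov d (act (inv g) x) (act (mul (inv g) h) x) x = gromov d x (act h x) (act g x).
Proof. rewrite <- (gromov_act g), act_mul, !act_Kinv. reflexivity. Qed.

(** Generators move [x] by at most [gen_bound]: elements of [S] by at most
    the sum of their displacements, elements of [G_x] not at all. *)
Definition disp_sum (l : list G) : R := fold_right (fun s acc => disp s + acc) 0 l.
Definition gen_bound : R := disp_sum S.

Lemma disp_sum_spec l : 0 <= disp_sum l /\ forall a, In a l -> disp a <= disp_sum l.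
Proof.
  induction l as [|s l [IH1 IH2]]; simpl; [split; [lra|tauto]|].
  pose proof (dpos Hmet x (act s x)) as Hs. fold (disp s) in Hs.
  split; [lra|]. intros a [<-|Ha]; [lra|]. specialize (IH2 a Ha). lra.
Qed.

Lemma gen_bound_spec : 0 <= gen_bound /\ forall a, In a S -> disp a <= gen_bound.
Proof. apply disp_sum_spec. Qed.

Lemma letter_disp_le l : gen_set (snd l) -> disp (letter_val inv l) <= gen_bound.
Proof.
  destruct gen_bound_spec as [H0 HS'].
  intro Hl. destruct l as [b a]. unfold letter_val. simpl in *.
  assert (disp a <= gen_bound).
  { destruct Hl as [Ha|Ha]; [apply HS'; exact Ha|].
    unfold disp. rewrite Ha, (dself Hmet). exact H0. }
  destruct b; [rewrite disp_inv|]; assumption.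
Qed.

Definition prefix (w : list (bool * G)) (i : nat) : G := word_val mul inv e (firstn i w).

Lemma prefix_step w i : word_over gen_set w -> (i < length w)%nat ->
  d (act (prefix w i) x) (act (prefix w (Datatypes.S i)) x) <= gen_bound.
Proof.
  intros Hw Hi. destruct (firstn_S w Hi) as [l [Hin E]].
  assert (Hl : gen_set (snd l)) by (unfold word_over in Hw; rewrite Forall_forall in Hw; auto).
  unfold prefix. rewrite E, (word_val_app Hgrp). simpl. rewrite (mulg1 Hgrp).
  rewrite act_mul, act_iso. apply letter_disp_le, Hl.
Qed.

Lemma bounded_disp_wlen r : exists M, forall g, disp g <= r -> wl g M.
Proof.
  destruct (INR_archimed 1 r ltac:(lra)) as [N HN].
  destruct (proj2 Hprop N) as [M HM]. exists M. intros g Hg. apply HM. unfold disp in Hg. lra.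
Qed.

(** [(R2,k)] lets us split any [g] as [u (u^-1 g)] with both factors of
    roughly half the displacement.  We take [u] from (R2,k) applied to [g]
    and a prefix [P] of a word for [g] with [(P x . g x)_x ~ disp g / 2]. *)
Definition split_const : R := 1 + gen_bound + INR k * delta.

Lemma R2_split g : 0 < disp g -> exists u,
  disp u <= disp g / 2 + split_const /\ disp (mul (inv u) g) <= disp g / 2 + split_const.
Proof.
  intro Hg. destruct (HS g) as [w [Hw0 Hv]].
  assert (Hw : word_over gen_set w).
  { unfold word_over in *. eapply Forall_impl; [|exact Hw0]. intros a Ha; left; exact Ha. }
  set (F := fun i => gromov d (act (prefix w i) x) (act g x) x).
  assert (F0 : F 0%nat = 0).
  { unfold F, prefix, gromov. simpl. rewrite act_e, (dself Hmet), (dsym Hmet). lra. }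
  assert (Fn : F (length w) = disp g).
  { unfold F, prefix, gromov, disp. rewrite firstn_all, Hv, (dself Hmet), (dsym Hmet). lra. }
  destruct (discrete_ivt F (length w) (v := disp g / 2) ltac:(lra) ltac:(lra))
    as [i [Hi [HFi HFSi]]].
  assert (Hstep : F (Datatypes.S i) <= F i + gen_bound).
  { unfold F. pose proof (prefix_step Hw Hi) as Hd. rewrite (dsym Hmet) in Hd.
    pose proof (gromov_lipschitz Hmet (act (prefix w (Datatypes.S i)) x) (act (prefix w i) x) (act g x) x).
    lra. }
  destruct (HR2 g (prefix w i)) as [u [Hu1 [Hu2 _]]].
  pose proof (proj1 gen_bound_spec) as Hgb.
  exists u. unfold split_const. split.
  - rewrite (gromov_sym Hmet) in Hu1. fold (disp u) in Hu1. unfold F in HFi. lra.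
  - assert (E : gromov d (act (inv g) x) (act (mul (inv g) (prefix w i)) x) x
                = disp g - F i).
    { rewrite gromov_translate_inv.
      pose proof (gromov_complement Hmet x (act (prefix w i) x) (act g x)) as C.
      unfold F, disp. rewrite (gromov_sym Hmet (act (prefix w i) x)). lra. }
    rewrite E in Hu2. fold (disp (mul (inv u) g)) in Hu2. lra.
Qed.

Lemma split_const_ge1 : 1 <= split_const.
Proof.
  unfold split_const. pose proof (proj1 gen_bound_spec).
  pose proof (hyperbolic_delta_nonneg Hmet Hhyp x). pose proof (pos_INR k). nra.
Qed.

Lemma wlen_by_splitting M : (forall g, disp g <= 4 * split_const -> wl g M) ->
  forall N g, disp g <= INR N * split_const -> exists m, wl g m /\
    INR m <= Rmax (INR M) (INR M / split_const * (disp g - 2 * split_const)).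
Proof.
  intro HM. pose proof split_const_ge1 as Hc.
  set (lam := INR M / split_const).
  assert (Hlam : lam * split_const = INR M) by (unfold lam; field; lra).
  assert (Hlam0 : 0 <= lam)
    by (unfold lam; apply Rmult_le_pos; [apply pos_INR|apply Rlt_le, Rinv_0_lt_compat; lra]).
  induction N as [|N IH]; intros g Hg.
  { exists M; split; [apply HM; simpl in Hg; lra|apply Rmax_l]. }
  destruct (Rle_dec (disp g) (4 * split_const)) as [Hsmall|Hbig].
  { exists M; split; [apply HM, Hsmall|apply Rmax_l]. }
  destruct (R2_split (g := g) ltac:(lra)) as [u [Hu1 Hu2]]. rewrite S_INR in Hg.
  destruct (IH u ltac:(lra)) as [m1 [Hm1 Hm1']].
  destruct (IH (mul (inv u) g) ltac:(lra)) as [m2 [Hm2 Hm2']].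
  exists (m1 + m2)%nat. split.
  - rewrite <- (mulKVg Hgrp u g). apply (wlen_mul Hgrp); assumption.
  - assert (Hhalf : forall v, v <= disp g / 2 + split_const ->
             Rmax (INR M) (lam * (v - 2 * split_const)) <= lam * (disp g / 2 - split_const)).
    { intros v Hv. apply Rmax_lub; [rewrite <- Hlam|]; nra. }
    rewrite plus_INR. eapply Rle_trans; [|apply Rmax_r].
    pose proof (Hhalf _ Hu1). pose proof (Hhalf _ Hu2). fold lam in Hm1', Hm2'. lra.
Qed.

Lemma wlen_linear_in_disp : exists lam mu, 0 <= lam /\ 0 <= mu /\
  forall g, exists m, wl g m /\ INR m <= lam * disp g + mu.
Proof.
  destruct (bounded_disp_wlen (4 * split_const)) as [M HM].
  pose proof split_const_ge1 as Hc.
  set (lam := INR M / split_const).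
  assert (Hlam0 : 0 <= lam)
    by (apply Rmult_le_pos; [apply pos_INR|apply Rlt_le, Rinv_0_lt_compat; lra]).
  exists lam, (INR M). split; [exact Hlam0|split; [apply pos_INR|]].
  intro g. destruct (INR_archimed split_const (disp g) ltac:(lra)) as [N HN].
  destruct (wlen_by_splitting HM N (g := g) ltac:(lra)) as [m [Hm Hmb]].
  exists m; split; [exact Hm|].
  pose proof (dpos Hmet x (act g x)) as Hd. fold (disp g) in Hd.
  assert (0 <= lam * disp g) by (apply Rmult_le_pos; assumption).
  assert (0 <= lam * split_const) by (apply Rmult_le_pos; lra).
  eapply Rle_trans; [exact Hmb|]. fold lam. pose proof (pos_INR M). apply Rmax_lub; lra.
Qed.

Lemma prefix_wlen w i : word_over gen_set w -> wl (prefix w i) i.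
Proof.
  intro Hw. exists (firstn i w). repeat split; [apply (word_over_firstn i Hw)|].
  rewrite length_firstn. lia.
Qed.

Lemma suffix_wlen w i : word_over gen_set w ->
  wl (word_val mul inv e (skipn i w)) (length w - i).
Proof.
  intro Hw. exists (skipn i w). repeat split; [apply (word_over_skipn i Hw)|].
  rewrite length_skipn. lia.
Qed.

Lemma prefix_suffix w i : word_val mul inv e w = mul (prefix w i) (word_val mul inv e (skipn i w)).
Proof. unfold prefix. rewrite <- (word_val_app Hgrp), firstn_skipn. reflexivity. Qed.

Definition orbit_path (g : G) (w : list (bool * G)) (i : nat) : X := act (mul g (prefix w i)) x.

Lemma orbit_path_step g w i : word_over gen_set w -> (i < length w)%nat ->
  d (orbit_path g w i) (orbit_path g w (Datatypes.S i)) <= 1 + gen_bound.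
Proof.
  intros Hw Hi. unfold orbit_path. rewrite !act_mul, act_iso.
  pose proof (prefix_step Hw Hi). lra.
Qed.

(** If [w] is a geodesic word for [g^-1 h], its orbit path is a discrete
    quasi-geodesic: a shortcut between [p i] and [p j] would shorten [w]. *)
Lemma orbit_path_quasi_geodesic lam mu
  (Hlin : forall f, exists m, wl f m /\ INR m <= lam * disp f + mu) g h w :
  word_over gen_set w -> word_val mul inv e w = mul (inv g) h ->
  (forall m, wl (mul (inv g) h) m -> (length w <= m)%nat) ->
  forall i j, (i <= j <= length w)%nat ->
  INR (j - i) <= lam * d (orbit_path g w i) (orbit_path g w j) + mu.
Proof.
  intros Hw Hv Hmin i j Hij.
  unfold orbit_path. rewrite orbit_dist, (rel_cancel Hgrp).
  destruct (Hlin (mul (inv (prefix w i)) (prefix w j))) as [m [[w' [Hw' [Hv' Hm]]] Hmb]].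
  eapply Rle_trans; [|exact Hmb]. apply le_INR.
  assert (Hshort : wl (mul (inv g) h) (i + m + (length w - j))).
  { exists (firstn i w ++ w' ++ skipn j w). repeat split.
    - apply (word_over_app (word_over_firstn i Hw)), (word_over_app Hw' (word_over_skipn j Hw)).
    - rewrite !(word_val_app Hgrp), Hv', <- Hv, (prefix_suffix w j).
      fold (prefix w i). rewrite (mulA Hgrp), (mulKVg Hgrp). reflexivity.
    - rewrite !length_app, length_firstn, length_skipn. lia. }
  specialize (Hmin _ Hshort). lia.
Qed.

(** If [c x] is
    almost between [g x] and [h x], stability puts [c x] near the orbit
    path of a geodesic word from [g] to [h], i.e. near some [g P_i x]; by
    properness [c] is then at bounded word distance from [g P_i], which lies
    on a geodesic from [g] to [h] in Gamma.  Only here is [X] required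
    to be geodesic. *)
Hypothesis Hgeo : geodesic_space d.

Lemma betweenness_transfer K0 : 0 <= K0 -> exists K1, 0 <= K1 /\ forall g c h,
  almost_between d K0 (act g x) (act c x) (act h x) -> cay_between mul inv e gen_set K1 g c h.
Proof.
  intro HK0.
  destruct wlen_linear_in_disp as [lam [mu [Hlam [Hmu Hlin]]]].
  assert (HL : 1 <= 1 + gen_bound) by (pose proof (proj1 gen_bound_spec); lra).
  destruct (quasi_geodesic_stability Hmet Hhyp Hgeo (K0 / 2) HL Hlam Hmu) as [C HC].
  destruct (bounded_disp_wlen C) as [M HM].
  exists (2 * INR M). split; [pose proof (pos_INR M); lra|].
  intros g c h Hb n1 n2 n [_ Hmin1] [_ Hmin2] [[w [Hw [Hv Hlen]]] Hmin].
  assert (Hn : length w = n) by (apply Nat.le_antisymm; [exact Hlen|apply Hmin; exists w; auto]).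
  assert (Hq : gromov d (orbit_path g w 0%nat) (orbit_path g w n) (act c x) <= K0 / 2).
  { unfold orbit_path, prefix. rewrite <- Hn, firstn_all, Hv, (mulKVg Hgrp). simpl.
    rewrite (mulg1 Hgrp). unfold almost_between in Hb. unfold gromov.
    rewrite (dsym Hmet (act h x)). lra. }
  destruct (HC n (orbit_path g w) (act c x)) as [i [Hi Hci]].
  - intros j Hj. apply orbit_path_step; [exact Hw|lia].
  - intros i j Hij. apply (orbit_path_quasi_geodesic Hlin (h := h)); [exact Hw|exact Hv| |lia].
    intros m Hm. rewrite Hn. apply Hmin, Hm.
  - exact Hq.
  - unfold orbit_path in Hci. rewrite orbit_dist in Hci.
    pose proof (HM _ Hci) as Hnear.
    assert (Hpre : wl (mul (inv g) (mul g (prefix w i))) i)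
      by (rewrite (mulKg Hgrp); apply prefix_wlen, Hw).
    assert (Hsuf : wl (mul (inv (mul g (prefix w i))) h) (n - i)).
    { rewrite (invMg Hgrp), <- (mulA Hgrp), <- Hv, (prefix_suffix w i), (mulKg Hgrp), <- Hn.
      apply suffix_wlen, Hw. }
    pose proof (Hmin1 _ (wlen_rel_trans Hgrp _ _ _ Hpre (wlen_rel_sym Hgrp _ _ Hnear))) as E1.
    pose proof (Hmin2 _ (wlen_rel_trans Hgrp _ _ _ Hnear Hsuf)) as E2.
    apply le_INR in E1, E2. rewrite !plus_INR, minus_INR in * by lia. lra.
Qed.

(** (R2,k) provides approximate centers of orbit triangles: apply it to
    [a^-1 b] and [a^-1 c] and translate by [a]. *)
Lemma triangle_center a b c : exists m,
  d (act a x) (act m x) <= gromov d (act b x) (act c x) (act a x) + INR k * delta /\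
  d (act m x) (act b x) <= gromov d (act a x) (act c x) (act b x) + INR k * delta /\
  d (act m x) (act c x) <= gromov d (act a x) (act b x) (act c x) + INR k * delta.
Proof.
  destruct (HR2 (mul (inv a) b) (mul (inv a) c)) as [u [H1 [H2 H3]]].
  assert (Htr : forall y, act a (act (mul (inv a) y) x) = act y x)
    by (intro y; rewrite act_mul, act_Kinv; reflexivity).
  rewrite <- (gromov_act a), !Htr in H1.
  rewrite gromov_translate_inv, <- (gromov_act a), !Htr in H2, H3.
  exists (mul a u). split; [rewrite act_mul, act_iso; exact H1|].
  rewrite !orbit_dist, !(invMg Hgrp), <- !(mulA Hgrp). split; assumption.
Qed.

(** Both
    products are read off as distances from [w] to approximate centers, and
    the center of [w y u] lies almost between [w] and the center of [w y z]. *)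
Lemma gprod_compare K (HK : 0 <= K)
  (Htr : forall g c h, almost_between d (20 * (INR k * delta) + 10 * delta)
           (act g x) (act c x) (act h x) -> cay_between mul inv e gen_set K g c h)
  w y z u dyw dzw dyz duw dyu :
  gromov d (act y x) (act z x) (act w x) >= gromov d (act y x) (act u x) (act w x) - delta ->
  cd y w dyw -> cd z w dzw -> cd y z dyz -> cd u w duw -> cd y u dyu ->
  gprod (INR dyw) (INR dzw) (INR dyz) >= gprod (INR dyw) (INR duw) (INR dyu) - 3 * K.
Proof.
  intros Hx Hyw Hzw Hyz Huw Hyu.
  set (s := INR k * delta).
  pose proof (hyperbolic_delta_nonneg Hmet Hhyp x) as Hd.
  assert (Hs : 0 <= s) by (pose proof (pos_INR k); unfold s; nra).
  assert (Hweak : forall c g m h, almost_between d c (act g x) (act m x) (act h x) ->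
            c <= 20 * s + 10 * delta -> cay_between mul inv e gen_set K g m h).
  { intros c g m h Hb Hc. apply Htr. unfold almost_between in *. fold s. lra. }
  destruct (triangle_center w y z) as [m1 [A1 [B1 C1]]].
  destruct (triangle_center w y u) as [m2 [A2 [B2 C2]]].
  fold s in A1, B1, C1, A2, B2, C2.
  destruct (approximate_center Hmet _ A1 B1 C1) as [Bwy1 [Bwz1 [Byz1 D1]]].
  destruct (approximate_center Hmet _ A2 B2 C2) as [Bwy2 [Bwu2 [Byu2 _]]].
  assert (Bnest : almost_between d (3 * (delta + 2 * s) + 5 * (2 * s) + 6 * delta)
                    (act w x) (act m2 x) (act m1 x)).
  { apply (almost_between_nested Hmet Hhyp (Y := act y x)); [lra|lra|exact Bwy1|exact Bwy2|lra]. }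
  destruct (cay_dist_exists w m1 generating) as [a1 Ha1].
  destruct (cay_dist_exists w m2 generating) as [a2 Ha2].
  destruct (cay_dist_exists m2 m1 generating) as [f Hf].
  destruct (center_gprod Hgrp generating (Hweak _ _ _ _ Bwy1 ltac:(lra)) (Hweak _ _ _ _ Bwz1 ltac:(lra))
              (Hweak _ _ _ _ Byz1 ltac:(lra)) Ha1 Hyw Hzw Hyz) as [G1 _].
  destruct (center_gprod Hgrp generating (Hweak _ _ _ _ Bwy2 ltac:(lra)) (Hweak _ _ _ _ Bwu2 ltac:(lra))
              (Hweak _ _ _ _ Byu2 ltac:(lra)) Ha2 Hyw Huw Hyu) as [_ G2].
  pose proof (Hweak _ _ _ _ Bnest ltac:(lra) _ _ _ Ha2 Hf Ha1) as Ha21.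
  pose proof (pos_INR f). lra.
Qed.

Lemma cayley_graph_hyperbolic : cay_hyperbolic mul inv e gen_set.
Proof.
  pose proof (hyperbolic_delta_nonneg Hmet Hhyp x) as Hd.
  destruct (betweenness_transfer (K0 := 20 * (INR k * delta) + 10 * delta)) as [K [HK Htr]].
  { pose proof (pos_INR k). nra. }
  exists (3 * K). split; [lra|].
  intros w y z u dyw dzw dyz duw dyu duz Hyw Hzw Hyz Huw Hyu Huz.
  pose proof (Hhyp (act w x) (act y x) (act z x) (act u x)) as H4.
  destruct (Rle_dec (gromov d (act y x) (act u x) (act w x))
                    (gromov d (act u x) (act z x) (act w x))) as [Hc|Hc].
  - rewrite Rmin_left in H4 by exact Hc.
    pose proof (gprod_compare HK Htr H4 Hyw Hzw Hyz Huw Hyu).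
    pose proof (Rmin_l (gprod (INR dyw) (INR duw) (INR dyu)) (gprod (INR duw) (INR dzw) (INR duz))).
    lra.
  - rewrite Rmin_right in H4 by lra.
    rewrite (gromov_sym Hmet (act y x)), (gromov_sym Hmet (act u x)) in H4.
    pose proof (gprod_compare HK Htr H4 Hzw Hyw (cay_dist_sym Hgrp Hyz) Huw (cay_dist_sym Hgrp Huz)).
    pose proof (Rmin_r (gprod (INR dyw) (INR duw) (INR dyu)) (gprod (INR duw) (INR dzw) (INR duz))).
    unfold gprod in *. lra.
Qed.

End Action.

Theorem mainTheorem17
  (G : Type) (mul : G -> G -> G) (inv : G -> G) (e : G)
  (Hgrp : is_group mul inv e)
  (S : list G) (HS : generates mul inv e (fun g => In g S))
  (X : Type) (d : X -> X -> R) (Hmet : is_metric d) (Hgeo : geodesic_space d)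
  (delta : R) (Hdelta : 0 <= delta) (Hhyp : hyperbolic d delta)
  (act : G -> X -> X) (Hact : isometric_action mul e d act)
  (x : X) (Hprop : proper_rel mul inv e S d act x)
  (k : nat) (HR2 : R2k mul inv d act x delta k) :
  weakly_rel_hyperbolic mul inv e S (fun g => act g x = x).
Proof.
  exact (cayley_graph_hyperbolic Hgrp HS Hmet Hhyp Hact Hprop HR2 Hgeo).
Qed.
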